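(* Let $n\geq 4$ and $G\in\mathcal{GAQ}_n$. (i) If $(a,b)$ is an edge of $G$, $A$ is the set of neighbors of $a$ and $B$ the set of neighbors of $b$, then $|(A\setminus\{b\})\setminus(B\setminus\{a\})|\geq 2$. (ii) If $a,b$ are distinct nonadjacent vertices of $G$ with neighbor sets $A$ and $B$ respectively, then $|A\setminus B|\geq 2$.
   Context: The $n$-dimensional augmented cube $AQ_n$ ($n\geq 1$) has vertex set all binary strings $u_1u_2\cdots u_n$. $AQ_1\cong K_2$ on vertices $0,1$. For $n\geq 2$, $AQ_n$ consists of a copy $AQ^0_{n-1}$ of $AQ_{n-1}$ with $0$ prefixed to every label and a copy $AQ^1_{n-1}$ with $1$ prefixed, plus the following edges: $0u_1\cdots u_{n-1}$ is adjacent to $1v_1\cdots v_{n-1}$ iff either $u_i=v_i$ for all $i$ (cross edge) or $u_i\neq v_i$ for all $i$ (complement edge). $AQ_n$ is $(2n-1)$-regular. Generalized augmented cubes: $\mathcal{GAQ}_4=\{AQ_4\}$; for $n\geq 5$, $\mathcal{GAQ}_n$ consists of all graphs $(V_1\cup V_2, E_1\cup E_2\cup M_1\cup M_2)$ where $(V_1,E_1),(V_2,E_2)$ are (vertex-disjoint copies of, possibly identical) graphs in $\mathcal{GAQ}_{n-1}$ and $M_1,M_2$ are edge-disjoint perfect matchings between $V_1$ and $V_2$. *)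

From mathcomp Require Import all_boot.
Set Implicit Arguments. Unset Strict Implicit. Unset Printing Implicit Defensive.

(* Adjacency in the augmented cube AQ_n on bit strings u_1 ... u_n
   (head of the list = u_1 = the prefixed bit), following the recursive
   definition: AQ_1 = K_2; in AQ_n, 0u ~ 0v iff u ~ v in AQ_{n-1}, same for 1,
   and 0u ~ 1v iff u = v (cross edge) or u_i <> v_i for all i (complement edge). *)
Fixpoint aq_adj (u v : seq bool) : bool :=
  match u, v with
  | [:: a], [:: b] => a != b
  | a :: u', b :: v' =>
      if a == b then aq_adj u' v'
      else (u' == v') || all2 (fun x y => x != y) u' v'
  | _, _ => false
  end.

Definition AQ4_rel : rel (4.-tuple bool) := fun u v => aq_adj u v.

(* Edge relation of the graph built from G1 = (T1,e1), G2 = (T2,e2) and two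
   perfect matchings M1, M2 : V1 -> V2 (given as bijections). *)
Definition join_rel (T1 T2 : finType) (e1 : rel T1) (e2 : rel T2)
  (M1 M2 : T1 -> T2) : rel (T1 + T2) :=
  fun x y =>
    match x, y with
    | inl a, inl b => e1 a b
    | inr a, inr b => e2 a b
    | inl a, inr b => (M1 a == b) || (M2 a == b)
    | inr a, inl b => (M1 b == a) || (M2 b == a)
    end.

(* isGAQ n T e : the graph (T, e) belongs to the class GAQ_n
   (closed under isomorphism, i.e. we consider copies of the graphs). *)
Inductive isGAQ : nat -> forall T : finType, rel T -> Prop :=
  | GAQ_base : isGAQ 4 AQ4_rel
  | GAQ_step (n : nat) (T1 T2 : finType) (e1 : rel T1) (e2 : rel T2)
      (M1 M2 : T1 -> T2) :
      4 <= n -> isGAQ n e1 -> isGAQ n e2 ->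
      bijective M1 -> bijective M2 -> (forall x, M1 x != M2 x) ->
      isGAQ n.+1 (join_rel e1 e2 M1 M2)
  | GAQ_iso (n : nat) (T T' : finType) (e : rel T) (e' : rel T') (f : T -> T') :
      isGAQ n e -> bijective f -> (forall x y, e' (f x) (f y) = e x y) ->
      isGAQ n e'.

From mathcomp Require Import all_boot.
Set Implicit Arguments. Unset Strict Implicit. Unset Printing Implicit Defensive.

(* Both claims follow from one invariant of the class GAQ_n:
   the graph is loopless, every vertex has at least 4 neighbours, and any
   two distinct vertices a, b are "2-separated": a has at least two
   neighbours other than b that are not neighbours of b.  For an edge (a,b)
   this private set is contained in (A\{b}) \ (B\{a}), and it is always
   contained in A \ B.
   - AQ_4 satisfies the invariant; this is a finite check, done by
     enumerating the 16 bit strings of length 4 as a list.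
   - The invariant transfers along graph isomorphisms.
   - It is preserved by the join of two graphs along two perfect matchings:
     for two vertices on the same side the private neighbours of the old
     graph survive, and for vertices a, b on opposite sides b has at most two
     neighbours on the side of a (its two matching partners), so at least
     4 - 2 = 2 of the old neighbours of a stay private. *)

Section Invariant.

Variable T : finType.
Implicit Types (e : rel T) (a b : T).

Definition nbhd e a : {set T} := [set x | e a x].

Definition private_nbhd e a b : {set T} := nbhd e a :\ b :\: nbhd e b.

Definition gaq_invariant e :=
  [/\ irreflexive e,
      forall a, 4 <= #|nbhd e a| &
      forall a b, a != b -> 2 <= #|private_nbhd e a b| ].

Lemma private_sub_edge e a b :
  private_nbhd e a b \subset (nbhd e a :\ b) :\: (nbhd e b :\ a).
Proof.
by apply/subsetP => x; rewrite !inE => /and3P[/negbTE -> -> ->]; rewrite andbF.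
Qed.

Lemma private_sub_nonedge e a b :
  private_nbhd e a b \subset nbhd e a :\: nbhd e b.
Proof. by apply/subsetP => x; rewrite !inE => /and3P[-> _ ->]. Qed.

End Invariant.

Lemma card_le_imset (T U : finType) (f : T -> U) (A : {set T}) (X : {set U}) :
  injective f -> f @: A \subset X -> #|A| <= #|X|.
Proof. by move=> inj_f sAX; rewrite -(card_imset A inj_f) subset_leq_card. Qed.

Lemma card_private_induced (T U : finType) (e0 : rel T) (e : rel U)
    (f : T -> U) (a b : T) :
  injective f -> (forall x y, e (f x) (f y) = e0 x y) ->
  #|private_nbhd e0 a b| <= #|private_nbhd e (f a) (f b)|.
Proof.
move=> inj_f ef; apply: (card_le_imset inj_f).
by apply/subsetP => _ /imsetP[x + ->]; rewrite !inE !ef (inj_eq inj_f).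
Qed.

Lemma private_of_copy (T U : finType) (e : rel U) (f : T -> U) (A : {set T})
    (x z : U) :
  injective f -> f @: A \subset nbhd e x -> (forall y, f y != z) ->
  #|A| - #|[set y | e z (f y)]| <= #|private_nbhd e x z|.
Proof.
move=> inj_f sAx fz; set S := [set y | e z (f y)].
have le_diff : #|A| - #|S| <= #|A :\: S|.
  by rewrite cardsD leq_sub2l // subset_leq_card ?subsetIr.
apply: leq_trans le_diff (card_le_imset inj_f _).
apply/subsetP => _ /imsetP[y + ->].
rewrite !inE => /andP[zy Ay]; rewrite fz zy.
by have := subsetP sAx (f y) (imset_f f Ay); rewrite inE => ->.
Qed.

Lemma card_preimage_le1 (T U : finType) (f : T -> U) (b : U) :
  injective f -> #|[set y | f y == b]| <= 1.
Proof.
move=> inj_f; apply/card_le1_eqP => y y'; rewrite !inE => /eqP fy /eqP fy'.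
by apply: inj_f; rewrite fy fy'.
Qed.

Definition cons_bit (l : seq (seq bool)) : seq (seq bool) :=
  [seq x :: t | x <- [:: false; true], t <- l].

Definition bits4 : seq (seq bool) := iter 4 cons_bit [:: [::]].

Lemma mem_bits4 s : (s \in bits4) = (size s == 4).
Proof.
case: s => [|x0 [|x1 [|x2 [|x3 [|x4 s]]]]] //;
by case: x0; try case: x1; try case: x2; try case: x3.
Qed.

Lemma perm_bits4 : perm_eq [seq val t | t : 4.-tuple bool] bits4.
Proof.
apply: uniq_perm; [by rewrite (map_inj_uniq val_inj) enum_uniq | by [] |].
move=> s; rewrite mem_bits4; apply/mapP/eqP => [[t _ ->]|s4].
  exact: size_tuple.
by exists (Tuple (introT eqP s4)); rewrite ?mem_enum.
Qed.

Lemma card_bits4 (P : pred (seq bool)) :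
  #|[set t : 4.-tuple bool | P t]| = count P bits4.
Proof.
rewrite -(permP perm_bits4) count_map cardsE cardE /enum_mem size_filter.
by rewrite count_filter; apply: eq_count => t; rewrite !inE andbT.
Qed.

Lemma bits4_irreflexive : all (fun a => ~~ aq_adj a a) bits4.
Proof. by []. Qed.

Lemma bits4_degree : all (fun a => 4 <= count (aq_adj a) bits4) bits4.
Proof. by []. Qed.

Lemma bits4_private :
  all (fun a => all (fun b => (a != b) ==>
    (2 <= count (fun s => aq_adj a s && (s != b) && ~~ aq_adj b s) bits4))
    bits4) bits4.
Proof. by []. Qed.

Lemma gaq_invariant_AQ4 : gaq_invariant AQ4_rel.
Proof.
have in4 (t : 4.-tuple bool) : val t \in bits4 by rewrite mem_bits4 size_tuple.
split=> [a | a | a b neq_ab].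
- exact/negbTE/(allP bits4_irreflexive _ (in4 a)).
- rewrite (_ : nbhd _ a = [set x : 4.-tuple bool | aq_adj a x]) ?card_bits4.
    exact: (allP bits4_degree _ (in4 a)).
  by apply/setP => x; rewrite !inE.
- pose P s := aq_adj a s && (s != val b) && ~~ aq_adj b s.
  rewrite (_ : private_nbhd _ a b = [set x : 4.-tuple bool | P x]).
    rewrite card_bits4.
    apply: (implyP (allP (allP bits4_private _ (in4 a)) _ (in4 b))).
    by rewrite val_eqE.
  apply/setP => x; rewrite !inE /P /AQ4_rel val_eqE.
  by rewrite andbC (andbC (x != b)).
Qed.

Lemma gaq_invariant_iso (T T' : finType) (e : rel T) (e' : rel T') (f : T -> T') :
  gaq_invariant e -> bijective f -> (forall x y, e' (f x) (f y) = e x y) ->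
  gaq_invariant e'.
Proof.
move=> [irr deg sep] bij_f ef; have [g fK gK] := bij_f.
have inj_f := bij_inj bij_f.
have nbhd_f a : f @: nbhd e a \subset nbhd e' (f a).
  by apply/subsetP => _ /imsetP[x + ->]; rewrite !inE ef.
split=> [a' | a' | a' b'].
- by rewrite -(gK a') ef.
- by rewrite -(gK a'); apply: leq_trans (deg _) (card_le_imset inj_f (nbhd_f _)).
- rewrite -(gK a') -(gK b') (inj_eq inj_f) => /sep sep_ab.
  exact: leq_trans sep_ab (card_private_induced _ _ inj_f ef).
Qed.

Section Join.

Variables (T1 T2 : finType) (e1 : rel T1) (e2 : rel T2) (M1 M2 : T1 -> T2).
Hypotheses (bij_M1 : bijective M1) (bij_M2 : bijective M2).

Let J := join_rel e1 e2 M1 M2.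

Lemma join_nbhd_inl a : inl @: nbhd e1 a \subset nbhd J (inl a).
Proof. by apply/subsetP => _ /imsetP[x + ->]; rewrite !inE. Qed.

Lemma join_nbhd_inr a : inr @: nbhd e2 a \subset nbhd J (inr a).
Proof. by apply/subsetP => _ /imsetP[x + ->]; rewrite !inE. Qed.

(* A vertex has at most two neighbours on the other side: its partners. *)
Lemma join_cross_inr b : #|[set y | J (inr b) (inl y)]| <= 2.
Proof.
rewrite (_ : [set y | _] = [set y | M1 y == b] :|: [set y | M2 y == b]).
  apply: leq_trans (leq_card_setU _ _) _.
  by rewrite (leq_add (card_preimage_le1 _ (bij_inj bij_M1)))
             ?(card_preimage_le1 _ (bij_inj bij_M2)).
by apply/setP => y; rewrite !inE.
Qed.

Lemma join_cross_inl b : #|[set y | J (inl b) (inr y)]| <= 2.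
Proof.
have sub : [set y | J (inl b) (inr y)] \subset [set M1 b; M2 b].
  by apply/subsetP => y; rewrite !inE /J /= !(eq_sym _ y).
by apply: leq_trans (subset_leq_card sub) _; rewrite cards2 ltnS leq_b1.
Qed.

Lemma gaq_invariant_join :
  gaq_invariant e1 -> gaq_invariant e2 -> gaq_invariant J.
Proof.
move=> [irr1 deg1 sep1] [irr2 deg2 sep2].
have inl_inj : injective (@inl T1 T2) by move=> ? ? [].
have inr_inj : injective (@inr T1 T2) by move=> ? ? [].
split=> [[a | a] | [a | a] | [a | a] [b | b] neq_ab].
- exact: irr1.
- exact: irr2.
- exact: leq_trans (deg1 a) (card_le_imset inl_inj (join_nbhd_inl a)).
- exact: leq_trans (deg2 a) (card_le_imset inr_inj (join_nbhd_inr a)).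
- rewrite (inj_eq inl_inj) in neq_ab.
  exact: leq_trans (sep1 a b neq_ab)
                   (@card_private_induced _ _ e1 J inl a b inl_inj (fun _ _ => erefl)).
- exact: leq_trans (leq_sub (deg1 a) (join_cross_inr b))
    (private_of_copy (z := inr b) inl_inj (join_nbhd_inl a) (fun _ => erefl)).
- exact: leq_trans (leq_sub (deg2 a) (join_cross_inl b))
    (private_of_copy (z := inl b) inr_inj (join_nbhd_inr a) (fun _ => erefl)).
- rewrite (inj_eq inr_inj) in neq_ab.
  exact: leq_trans (sep2 a b neq_ab)
                   (@card_private_induced _ _ e2 J inr a b inr_inj (fun _ _ => erefl)).
Qed.

End Join.

Lemma gaq_invariant_GAQ n (T : finType) (e : rel T) :
  isGAQ n e -> gaq_invariant e.
Proof.
elim=> {n T e} [| n T1 T2 e1 e2 M1 M2 _ _ inv1 _ inv2 bij1 bij2 _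
               | n T T' e e' f _ inv bij_f ef].
- exact: gaq_invariant_AQ4.
- exact: gaq_invariant_join.
- exact: gaq_invariant_iso inv bij_f ef.
Qed.

Theorem lemma3p3 (n : nat) (T : finType) (e : rel T) :
  4 <= n -> isGAQ n e ->
  (forall a b : T, e a b ->
     2 <= #|([set x | e a x] :\ b) :\: ([set x | e b x] :\ a)|) /\
  (forall a b : T, a != b -> ~~ e a b ->
     2 <= #|[set x | e a x] :\: [set x | e b x]|).
Proof.
move=> _ /gaq_invariant_GAQ[irr _ sep]; split=> [a b ab | a b neq_ab _].
- have neq_ab : a != b by apply: contraTneq ab => ->; rewrite irr.
  exact: leq_trans (sep a b neq_ab) (subset_leq_card (private_sub_edge e a b)).
- exact: leq_trans (sep a b neq_ab) (subset_leq_card (private_sub_nonedge e a b)).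
Qed.
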